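(* For a graph $G$, $\gamma_{(2,2,2)}(G)=3$ if and only if $\gamma_{\times2,t}(G)=3$.
   Context: All graphs are finite and simple; $N(v)$ is the open neighbourhood. $\gamma_{(2,2,2)}(G)$ is the minimum of $\sum_v f(v)$ over functions $f:V(G)\to\{0,1,2\}$ with $\sum_{u\in N(v)}f(u)\ge2$ for every vertex $v$ (defined when such $f$ exists, i.e., when $G$ has no isolated vertex). $\gamma_{\times2,t}(G)$ is the minimum size of $S\subseteq V(G)$ such that every vertex has at least two neighbours in $S$ (defined when $G$ has minimum degree at least $2$). *)

From mathcomp Require Import all_boot.
Set Implicit Arguments. Unset Strict Implicit. Unset Printing Implicit Defensive.

Definition simple_graph (T : finType) (e : rel T) : Prop :=
  symmetric e /\ irreflexive e.

Definition is_222_fun (T : finType) (e : rel T) (f : {ffun T -> 'I_3}) : Prop :=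
  forall v : T, 2 <= \sum_(u | e v u) (f u : nat).

Definition weight (T : finType) (f : {ffun T -> 'I_3}) : nat :=
  \sum_(v : T) (f v : nat).

Definition gamma222_eq (T : finType) (e : rel T) (k : nat) : Prop :=
  (exists f, is_222_fun e f /\ weight f = k) /\
  (forall f, is_222_fun e f -> k <= weight f).

Definition is_dtd_set (T : finType) (e : rel T) (S : {set T}) : Prop :=
  forall v : T, 2 <= #|[set u in S | e v u]|.

Definition min_degree_ge2 (T : finType) (e : rel T) : Prop :=
  forall v : T, 2 <= #|[set u | e v u]|.

(* gamma_{x2,t}(G) is defined (min degree >= 2) and equals k *)
Definition gammax2t_eq (T : finType) (e : rel T) (k : nat) : Prop :=
  min_degree_ge2 e /\
  (exists S, is_dtd_set e S /\ #|S| = k) /\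
  (forall S, is_dtd_set e S -> k <= #|S|).

From mathcomp Require Import all_boot.
Set Implicit Arguments. Unset Strict Implicit. Unset Printing Implicit Defensive.

(* A (2,2,2)-function of weight at most 3 takes only the values 0 and 1, since
   every vertex v already forces weight 2 onto N(v), which avoids v; so it is
   the indicator of its support, and that support is a double total dominating
   set. Conversely indicators of such sets are (2,2,2)-functions of the same
   weight, and no (2,2,2)-function has weight below 3: a vertex u with
   f u > 0 gives weight >= 2 + f u. *)

Section DoubleDomination.

Variables (T : finType) (e : rel T).

Definition indicator_fun (S : {set T}) : {ffun T -> 'I_3} :=
  [ffun v => inord (v \in S)].

Lemma indicator_funE (S : {set T}) v : (indicator_fun S v : nat) = (v \in S).
Proof. by rewrite ffunE inordK //; case: (v \in S). Qed.

Lemma sum_indicator_fun (S : {set T}) (P : pred T) :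
  \sum_(u | P u) (indicator_fun S u : nat) = #|[set u in S | P u]|.
Proof.
under eq_bigr do rewrite indicator_funE.
rewrite -big_mkcondr /= sum1_card; apply: eq_card => u.
by rewrite !inE andbC.
Qed.

Lemma weight_indicator_fun (S : {set T}) : weight (indicator_fun S) = #|S|.
Proof.
by rewrite /weight sum_indicator_fun; apply: eq_card => u; rewrite !inE andbT.
Qed.

Lemma is_222_fun_indicator (S : {set T}) :
  is_222_fun e (indicator_fun S) <-> is_dtd_set e S.
Proof. by split=> HS v; have := HS v; rewrite sum_indicator_fun. Qed.

Lemma dtd_set_min_degree_ge2 (S : {set T}) :
  is_dtd_set e S -> min_degree_ge2 e.
Proof.
move=> HS v; apply: leq_trans (HS v) (subset_leq_card _).
by apply/subsetP => u; rewrite !inE => /andP[].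
Qed.

Hypothesis e_irr : irreflexive e.

Lemma weight_222_fun_ge (f : {ffun T -> 'I_3}) v :
  is_222_fun e f -> 2 + f v <= weight f.
Proof.
move=> Hf; rewrite /weight (bigD1 v) //= [leqRHS]addnC leq_add2r.
apply: leq_trans (Hf v) _.
rewrite [leqLHS]big_mkcond [leqRHS]big_mkcond /=.
apply: leq_sum => u _; case evu: (e v u) => //.
by case: eqP evu => // ->; rewrite e_irr.
Qed.

Lemma weight_222_fun_ge3 (f : {ffun T -> 'I_3}) (v0 : T) :
  is_222_fun e f -> 3 <= weight f.
Proof.
move=> Hf; have : weight f != 0.
  by rewrite -lt0n (leq_trans _ (weight_222_fun_ge v0 Hf)).
rewrite sum_nat_eq0 => /forallPn [u]; rewrite -lt0n => fu_gt0.
by rewrite (leq_trans _ (weight_222_fun_ge u Hf)) // -[3]/(2 + 1) leq_add2l.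
Qed.

Lemma small_222_fun_indicator (f : {ffun T -> 'I_3}) :
  is_222_fun e f -> weight f <= 3 ->
  f = indicator_fun [set v | (f v : nat) != 0].
Proof.
move=> Hf Wf; apply/ffunP => v; apply/val_inj; rewrite /= indicator_funE inE.
have : (f v : nat) <= 1.
  by rewrite -(leq_add2l 2) (leq_trans (weight_222_fun_ge v Hf)).
by case: (f v : nat) => [|[|]].
Qed.

End DoubleDomination.

Theorem theorem17 (T : finType) (e : rel T) (He : simple_graph e) :
  gamma222_eq e 3 <-> gammax2t_eq e 3.
Proof.
have e_irr : irreflexive e := He.2.
split.
- move=> [[f [Hf Wf]] min_f].
  set S := [set v | (f v : nat) != 0].
  have f_ind : f = indicator_fun S by apply: small_222_fun_indicator; rewrite ?Wf.
  have HS : is_dtd_set e S by apply/is_222_fun_indicator; rewrite -f_ind.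
  split; [exact: dtd_set_min_degree_ge2 HS | split].
  + by exists S; rewrite -weight_indicator_fun -f_ind.
  + move=> S' HS'; rewrite -weight_indicator_fun.
    exact/min_f/is_222_fun_indicator.
- move=> [_ [[S [HS CS]] _]]; split.
  + exists (indicator_fun S).
    by rewrite weight_indicator_fun CS; split=> //; apply/is_222_fun_indicator.
  + have /card_gt0P [v0 _] : 0 < #|S| by rewrite CS.
    by move=> f; apply: weight_222_fun_ge3.
Qed.
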